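(* Let $C_m=\frac{1}{m+1}\binom{2m}{m}$ denote the $m$-th Catalan number. For every integer $n\ge 2$, \[\sum_{i=1}^{n-1} 2^{2i-1}C_{i-1}C_{2n-1-2i}=4^{n-1}C_{n-1}-C_{2n-2}.\] *)

From mathcomp Require Import all_boot all_order all_algebra.
Set Implicit Arguments. Unset Strict Implicit. Unset Printing Implicit Defensive.

(* m-th Catalan number C_m = binom(2m, m) / (m+1); the division is exact. *)
Definition catalan (m : nat) : nat := 'C(m.*2, m) %/ m.+1.

From mathcomp Require Import all_boot all_order all_algebra.
From mathcomp Require Import ring lra zify.
Import GRing.Theory Num.Theory.
Local Open Scope ring_scope.

(* Let [csqrt k] be the coefficients of -sqrt(1 - 4x)/2, so [csqrt 0 = -1/2]
   and [csqrt k.+1 = C_k].  With [n = N.+1], the left-hand side is the sum over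
   [j < N] of [term N j = 2 4^j C_j csqrt(2N - 2j)], whose term [j = N] would be
   [-4^N C_N].  Creative telescoping (Zeilberger) gives a rational certificate
   [cert] such that [p0 N * term N j + p1 N * term N.+1 j] telescopes in [j];
   summing yields a first-order recurrence for the full sum over [j <= N],
   whose solution is [-C_(2N)]. *)

Lemma catalan_mulS m : (catalan m * m.+1 = 'C(m.*2, m))%N.
Proof.
rewrite /catalan divnK //.
have bin_m := mul_bin_left m.*2 m.
rewrite (_ : (m.*2 - m = m)%N) in bin_m; last by lia.
have bin_le : ('C(m.*2, m.+1) <= 'C(m.*2, m))%N.
  have : (m.+1 * 'C(m.*2, m.+1) <= m.+1 * 'C(m.*2, m))%N.
    by rewrite bin_m leq_mul2r leqnSn orbT.
  by rewrite leq_mul2l.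
apply/dvdnP; exists ('C(m.*2, m) - 'C(m.*2, m.+1))%N; nia.
Qed.

Lemma catalan_fact m : (catalan m * m`! * m.+1`! = (m.*2)`!)%N.
Proof.
have := bin_fact (leq_addr m m); rewrite addnK addnn => <-.
by rewrite -catalan_mulS factS; ring.
Qed.

Lemma catalan_recS m : (catalan m.+1 * m.+2 = catalan m * (2 * m.*2.+1))%N.
Proof.
have fact_pos : (0 < m.+1 * (m`! * m.+1`!))%N by rewrite !muln_gt0 !fact_gt0.
apply/eqP; rewrite -(eqn_pmul2r fact_pos); apply/eqP.
have := catalan_fact m.+1; rewrite doubleS !factS -catalan_fact -mul2n.
by move=> fact_eq; apply: etrans (etrans _ fact_eq) _; rewrite ?factS; ring.
Qed.

Definition catq m : rat := (catalan m)%:R.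

Lemma catq_S m : catq m.+1 = catq m * (2 * (2 * m%:R + 1)) / m.+2%:R.
Proof.
apply: (canRL (mulfK _)); first by rewrite pnatr_eq0.
have := congr1 (fun k : nat => k%:R : rat) (catalan_recS m).
have cast : (2 * m.*2.+1)%N%:R = 2 * (2 * m%:R + 1) :> rat.
  by rewrite natrM -[m.*2.+1]addn1 natrD -mul2n natrM.
by rewrite /= natrM => ->; rewrite natrM cast.
Qed.

Definition csqrt k : rat := if k is k'.+1 then catq k' else - 2^-1.

Lemma csqrt_S k : csqrt k.+1 = csqrt k * (2 * (2 * k%:R - 1)) / k.+1%:R.
Proof.
apply: (canRL (mulfK _)); first by rewrite pnatr_eq0.
case: k => [|k] /=; first by rewrite (_ : catq 0 = 1) //; field.
by rewrite catq_S mulfVK ?pnatr_eq0 // mulrSr; ring.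
Qed.

Definition p0 (n : rat) : rat := 2 * (4 * n + 1) * (4 * n + 3) * (8 * n + 13).
Definition p1 (n : rat) : rat := - ((n + 2) * (2 * n + 3) * (8 * n + 5)).
Definition cert (n x : rat) : rat :=
  9 + 47 * x + 6 * x ^+ 2 - 32 * x ^+ 3 + 12 * n + 60 * n * x + 48 * n * x ^+ 2.

Definition term N j : rat := 2 * 4 ^+ j * catq j * csqrt (N.*2 - j.*2).
Definition cert_term N j : rat := cert N%:R j%:R * term N.+1 j.

Lemma term_zeilberger N j : (j <= N)%N ->
  p0 N%:R * term N j + p1 N%:R * term N.+1 j = cert_term N j.+1 - cert_term N j.
Proof.
move=> /subnK <-; set k := (N - j)%N.
rewrite /cert_term /term.
rewrite (_ : ((k + j).*2 - j.*2 = k.*2)%N); last by lia.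
rewrite (_ : ((k + j).+1.*2 - j.*2 = (k.*2).+2)%N); last by lia.
rewrite (_ : ((k + j).+1.*2 - j.+1.*2 = k.*2)%N); last by lia.
rewrite !csqrt_S catq_S exprS -addnn !mulrSr !natrD.
have hj : 0 <= j%:R :> rat by []. have hk : 0 <= k%:R :> rat by [].
move: (j%:R) (k%:R) hj hk (catq j) (csqrt (k + k)) => x y hx hy c d.
rewrite /p0 /p1 /cert; field.
by apply/and3P; split; apply: lt0r_neq0; lra.
Qed.

Lemma sum_term_recurrence N :
  p0 N%:R * \sum_(j < N.+1) term N j + p1 N%:R * \sum_(j < N.+1) term N.+1 j
  = cert_term N N.+1 - cert_term N 0.
Proof.
rewrite !mulr_sumr -big_split /=.
rewrite -(big_mkord xpredT (fun j => p0 N%:R * term N j + p1 N%:R * term N.+1 j)).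
apply: telescope_sumr_eq => // j /andP [_ ltjN].
exact: term_zeilberger.
Qed.

Lemma p1_neq0 (n : rat) : 0 <= n -> p1 n != 0.
Proof. by move=> n_ge0; rewrite oppr_eq0 !mulf_neq0 //; apply: lt0r_neq0; lra. Qed.

Lemma p1_cert_diag n : p1 n%:R + cert n%:R n.+1%:R = 0.
Proof. by rewrite -natr1 /p1 /cert; ring. Qed.

Lemma catq_boundary N :
  p0 N%:R * catq N.*2 - 2 * cert N%:R 0 * catq (N.*2).+1
  = - p1 N%:R * catq N.+1.*2.
Proof.
rewrite doubleS !catq_S -addnn !mulrSr !natrD.
have hN : 0 <= N%:R :> rat by [].
move: (N%:R) hN (catq (N + N)) => x hx c.
rewrite /p0 /p1 /cert; field.
by apply/andP; split; apply: lt0r_neq0; lra.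
Qed.

Lemma sum_term N : \sum_(j < N.+1) term N j = - catq N.*2.
Proof.
elim: N => [|N IH]; first by rewrite big_ord1 /term /= (_ : catq 0 = 1) //; field.
have term0 : term N.+1 0 = 2 * catq (N.*2).+1.
  by rewrite /term expr0 subn0 doubleS /= (_ : catq 0 = 1) //; ring.
have rec := sum_term_recurrence N; rewrite IH /cert_term term0 in rec.
apply: (mulfI (p1_neq0 _ (ler0n rat N))).
rewrite big_ord_recr /= mulrDr.
have -> : p1 N%:R * \sum_(j < N.+1) term N.+1 j = cert N%:R N.+1%:R * term N.+1 N.+1
    - cert N%:R 0 * (2 * catq (N.*2).+1) + p0 N%:R * catq N.*2.
  by rewrite -rec; ring.
have diag := p1_cert_diag N; have bd := catq_boundary N.
(* Abstract the values first: matching against [catq _] or [p0 _] would make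
   rewriting unfold them. *)
move: (term N.+1 N.+1) (cert N%:R N.+1%:R) (catq N.*2) (catq N.*2.+1) (catq N.+1.*2)
  (p0 N%:R) (p1 N%:R) (cert N%:R 0) diag bd => w c c0 c1 c2 a0 a1 r0 diag bd.
have -> : c = - a1 by apply/eqP; rewrite -addr_eq0 addrC diag.
by rewrite [RHS]mulrN -[RHS]mulNr -bd; ring.
Qed.

Lemma sum_term_lt N : \sum_(j < N) term N j = 4 ^+ N * catq N - catq N.*2.
Proof.
have := sum_term N; rewrite big_ord_recr /= /term subnn /= => sum_eq.
by rewrite -[catq N.*2]opprK -sum_eq; field.
Qed.

Theorem lemma3 (n : nat) (hn : (2 <= n)%N) :
  \sum_(1 <= i < n) ((2 ^ (2 * i - 1) * catalan (i - 1) * catalan (2 * n - 1 - 2 * i))%N%:Z)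
  = (4 ^ (n - 1) * catalan (n - 1))%N%:Z - (catalan (2 * n - 2))%N%:Z.
Proof.
case: n hn => // N _; apply: (@intr_inj rat).
rewrite rmorphB /= rmorph_sum /= -!pmulrn.
rewrite (_ : (N.+1 - 1 = N)%N); last by lia.
rewrite (_ : (2 * N.+1 - 2 = N.*2)%N); last by lia.
rewrite natrM natrX -[X in 4 ^+ _ * X]/(catq N) -[X in _ - X]/(catq N.*2) -sum_term_lt.
rewrite big_add1 /= big_mkord; apply: eq_bigr => i _.
have lt_iN := ltn_ord i.
rewrite -pmulrn /term (_ : (N.*2 - i.*2 = (2 * N.+1 - 1 - 2 * i.+1).+1)%N); last by lia.
rewrite (_ : (2 * i.+1 - 1 = (2 * i).+1)%N); last by lia.
by rewrite /= subn1 /= expnS expnM !natrM natrX /catq; ring.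
Qed.
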